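(* Let $R:X\leftrightarrow\mathcal{P}Y$, $S:Y\leftrightarrow\mathcal{P}Z$, $T:Z\leftrightarrow\mathcal{P}W$ be multirelations and suppose $R$ is inner deterministic. Then (1) $R\ast S=R\,1_Y^{\smile}\,S$; (2) $R\ast(S\ast T)=(R\ast S)\ast T$.
   Context: Relations $R\subseteq X\times Y$ are written $R:X\leftrightarrow Y$; composition $RS$ is diagrammatic relational composition and $R^{\smile}$ is the converse. A multirelation is a relation $X\leftrightarrow\mathcal{P}Y$. $1_Y=\{(b,\{b\})\mid b\in Y\}$. $R$ is inner deterministic if every $(a,B)\in R$ has $B$ a singleton. The Peleg composition of $R:X\leftrightarrow\mathcal{P}Y$ and $S:Y\leftrightarrow\mathcal{P}Z$ is $R\ast S=\{(a,C)\mid\exists B.\ (a,B)\in R\wedge\exists f:Y\to\mathcal{P}Z.\ (\forall b\in B.\ (b,f(b))\in S)\wedge C=\bigcup_{b\in B}f(b)\}$. *)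

From mathcomp Require Import all_boot.
From mathcomp Require Export classical_sets.
Set Implicit Arguments. Unset Strict Implicit. Unset Printing Implicit Defensive.
Local Open Scope classical_set_scope.

Definition Rel (X Y : Type) := X -> Y -> Prop.
Definition MRel (X Y : Type) := Rel X (set Y).

Definition rcomp (X Y Z : Type) (R : Rel X Y) (S : Rel Y Z) : Rel X Z :=
  fun a c => exists b, R a b /\ S b c.
Definition rconv (X Y : Type) (R : Rel X Y) : Rel Y X := fun b a => R a b.
Definition munit (Y : Type) : MRel Y Y := fun b B => B = [set b].
Definition inner_det (X Y : Type) (R : MRel X Y) : Prop :=
  forall a B, R a B -> exists b, B = [set b].
Definition peleg (X Y Z : Type) (R : MRel X Y) (S : MRel Y Z) : MRel X Z :=
  fun a C => exists B, R a B /\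
    exists f : Y -> set Z, (forall b, B b -> S b (f b)) /\
      C = \bigcup_(b in B) f b.

(* Since R is inner deterministic, R a B forces B = {b}, and a Peleg step
   through a singleton {b} just picks one S-image of b: (R * S) a C holds iff
   R a {b} and S b C for some b.  This is (1); for (2), both sides then unfold
   to the same data: such a b, a C with S b C, and a choice of T-images of the
   points of C whose union is the result. *)
From mathcomp Require Import ssreflect ssrfun boolp classical_sets.
Local Open Scope classical_set_scope.

Lemma rel_ext (X Y : Type) (R R' : Rel X Y) :
  (forall a b, R a b <-> R' a b) -> R = R'.
Proof. by move=> RR'; apply/funext => a; apply/funext => b; apply/propext. Qed.

Lemma rcomp_conv_munit (X Y : Type) (R : MRel X Y) a b :
  rcomp R (rconv (@munit Y)) a b <-> R a [set b].
Proof.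
split; first by move=> [B [RaB]]; rewrite /rconv /munit => <-.
by move=> Rab; exists [set b].
Qed.

Lemma peleg_inner_det (X Y Z : Type) (R : MRel X Y) (S : MRel Y Z) a C :
  inner_det R -> (peleg R S a C <-> exists b, R a [set b] /\ S b C).
Proof.
move=> detR; split.
- move=> [B [RaB [f [Sf ->]]]].
  have [b eB] := detR _ _ RaB; subst B.
  by exists b; rewrite bigcup_set1; split => //; apply: Sf.
- move=> [b [Rab SbC]]; exists [set b]; split => //.
  by exists (fun=> C); rewrite bigcup_set1; split => // _ ->.
Qed.

Lemma peleg_inner_detE (X Y Z : Type) (R : MRel X Y) (S : MRel Y Z) :
  inner_det R -> peleg R S = rcomp (rcomp R (rconv (@munit Y))) S.
Proof.
move=> detR; apply: rel_ext => a C; rewrite peleg_inner_det //.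
by split=> -[b [Rab SbC]]; exists b; split => //; apply/rcomp_conv_munit.
Qed.

Lemma peleg_assoc_inner_det (X Y Z W : Type)
    (R : MRel X Y) (S : MRel Y Z) (T : MRel Z W) :
  inner_det R -> peleg R (peleg S T) = peleg (peleg R S) T.
Proof.
move=> detR; apply: rel_ext => a D; rewrite peleg_inner_det //; split.
- move=> [b [Rab [C [SbC gT]]]]; exists C; split => //.
  by apply/peleg_inner_det => //; exists b.
- move=> [C [/peleg_inner_det-/(_ detR) [b [Rab SbC]] gT]].
  by exists b; split => //; exists C.
Qed.

Theorem lemma3p10 (X Y Z W : Type) (R : MRel X Y) (S : MRel Y Z) (T : MRel Z W) :
  inner_det R ->
  peleg R S = rcomp (rcomp R (rconv (@munit Y))) S /\
  peleg R (peleg S T) = peleg (peleg R S) T.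
Proof.
move=> detR.
by split; [apply: peleg_inner_detE | apply: peleg_assoc_inner_det].
Qed.
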